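(* Let $(B,\lfloor\cdot,\cdot\rfloor)$ be an SSD space with quadratic form $q$ and let $A\subset B$ be $q$-positive. If $\Phi_A(b)\ge q(b)$ for all $b\in\operatorname{conv}^w A$, then $G_{\Phi_A}=\mathcal{P}_q(\Phi_A^{@})$.
   Context: An SSD space is a pair $(B,\lfloor\cdot,\cdot\rfloor)$ with $B$ a nonzero real vector space and $\lfloor\cdot,\cdot\rfloor$ a symmetric bilinear form; $q(b)=\frac12\lfloor b,b\rfloor$. $w(B,B)$ is the coarsest topology on $B$ making all maps $b\mapsto\lfloor b,c\rfloor$ continuous; $\operatorname{conv}^w A$ is the $w(B,B)$-closure of the convex hull of $A$. A nonempty $A\subset B$ is $q$-positive if $q(b-c)\ge0$ for all $b,c\in A$. $\Phi_A(x)=\sup_{a\in A}\{\lfloor x,a\rfloor-q(a)\}$. For proper convex $f$, $f^{@}(b)=\sup_{c\in B}\{\lfloor c,b\rfloor-f(c)\}$, $\mathcal{P}_q(f)=\{b: f(b)=q(b)\}$, $G_f=\{b: f(b)+f^{@}(b)=\lfloor b,b\rfloor\}$. *)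

From mathcomp Require Import all_boot all_order all_algebra.
From mathcomp Require Import boolp classical_sets reals constructive_ereal ereal.
Set Implicit Arguments. Unset Strict Implicit. Unset Printing Implicit Defensive.
Import Order.TTheory GRing.Theory Num.Theory.
Local Open Scope ring_scope.
Local Open Scope classical_set_scope.

(* (B, bf) is an SSD space: B a nonzero real vector space, bf symmetric bilinear
   (linearity in the first argument + symmetry gives bilinearity). *)
Definition SSD_space (R : realType) (B : lmodType R) (bf : B -> B -> R) : Prop :=
  [/\ (forall b c, bf b c = bf c b),
      (forall (r s : R) (a b c : B), bf (r *: a + s *: b) c = r * bf a c + s * bf b c)
    & exists b : B, b != 0].

Definition qf (R : realType) (B : lmodType R) (bf : B -> B -> R) (b : B) : R :=
  bf b b / 2.

Definition q_positive (R : realType) (B : lmodType R) (bf : B -> B -> R)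
  (A : set B) : Prop :=
  A !=set0 /\ forall b c, A b -> A c -> 0 <= qf bf (b - c).

Definition PhiA (R : realType) (B : lmodType R) (bf : B -> B -> R)
  (A : set B) (x : B) : \bar R :=
  ereal_sup [set ((bf x a - qf bf a)%:E)%E | a in A].

Definition fenchel_at (R : realType) (B : lmodType R) (bf : B -> B -> R)
  (f : B -> \bar R) (b : B) : \bar R :=
  ereal_sup [set ((bf c b)%:E - f c)%E | c in [set: B]].

Definition Pq (R : realType) (B : lmodType R) (bf : B -> B -> R)
  (f : B -> \bar R) : set B :=
  [set b | f b = (qf bf b)%:E].

Definition Gf (R : realType) (B : lmodType R) (bf : B -> B -> R)
  (f : B -> \bar R) : set B :=
  [set b | (f b + fenchel_at bf f b)%E = (bf b b)%:E].

Definition conv_hull (R : realType) (B : lmodType R) (A : set B) : set B :=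
  [set x | exists n (w : 'I_n -> R) (a : 'I_n -> B),
     [/\ (forall i, 0 <= w i), \sum_(i < n) w i = 1, (forall i, A (a i))
       & x = \sum_(i < n) w i *: a i]].

(* closure in w(B,B), the coarsest topology making all b |-> [b,c] continuous:
   x is in the closure of S iff every basic neighbourhood
   {y : |[y - x, c_i]| < e, i = 1..k} meets S. *)
Definition wclosure (R : realType) (B : lmodType R) (bf : B -> B -> R)
  (S : set B) : set B :=
  [set x | forall (cs : seq B) (e : R), 0 < e ->
     exists2 s, S s & forall c, c \in cs -> `|bf (s - x) c| < e].

Definition convw (R : realType) (B : lmodType R) (bf : B -> B -> R)
  (A : set B) : set B :=
  wclosure bf (conv_hull A).

From mathcomp Require Import all_boot all_order all_algebra.
From mathcomp Require Import boolp classical_sets reals constructive_ereal ereal.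
From mathcomp Require Import topology normedtype sequences.
From mathcomp Require Import ring lra.
Set Implicit Arguments. Unset Strict Implicit. Unset Printing Implicit Defensive.
Import Order.TTheory GRing.Theory Num.Theory.
Import numFieldNormedType.Exports.
Local Open Scope ring_scope.
Local Open Scope classical_set_scope.

(* Q-positivity gives [Phi_A = q] on [A], hence [Phi_A <= Phi_A^@].  For [b] in
   [G_Phi], the Fenchel inequality at [b + d] shows that [sup_(a in A) [a, d]]
   is at least [[b, d]] for every direction [d]; projecting the origin onto the
   convex image of [conv A] in [R^k] under finitely many functionals [[. - b, c_j]]
   turns this into [b \in conv^w A].  Then [q b <= Phi_A b <= Phi_A^@ b] and
   [Phi_A b + Phi_A^@ b = 2 q b] force [Phi_A^@ b = q b].  Conversely,
   [Phi_A^@ b = q b] squeezes [Phi_A b] between [[b, b] - q b] and [q b]. *)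

Lemma norm_lt_of_sqr_lt (R : realDomainType) (x e : R) :
  0 < e -> x ^+ 2 < e ^+ 2 -> `|x| < e.
Proof.
move=> e0 h; rewrite -(@ltr_pXn2r _ 2%N) ?nnegrE ?normr_ge0 ?ltW //.
by rewrite real_normK ?num_real.
Qed.

Lemma linear_coef_ge0 (R : realFieldType) (P Q : R) : 0 <= Q ->
  (forall t, 0 < t <= 1 -> 0 <= 2 * t * P + t ^+ 2 * Q) -> 0 <= P.
Proof.
move=> Q0 h; rewrite leNgt; apply/negP => P0.
pose t := - P / (Q + 1 - P).
have den : 0 < Q + 1 - P by lra.
have t0 : 0 < t by rewrite /t divr_gt0 // oppr_gt0.
have t1 : t <= 1 by rewrite /t ler_pdivrMr // mul1r; lra.
have tQ : t * Q <= - P by rewrite /t mulrAC ler_pdivrMr //; nra.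
have := h t; rewrite t0 t1 => /(_ isT); nra.
Qed.

Lemma cvgn_of_sqr_dist_le (R : realType) (C : R) (x : R ^nat) :
  (forall n p, (n <= p)%N -> (x n - x p) ^+ 2 <= C / n.+1%:R) -> cvgn x.
Proof.
move=> hx; apply: (@cauchy_cvg R); apply: cauchy_exP => e e0.
have C1 : 0 < `|C| + 1 by rewrite ltr_wpDl.
have d0 : 0 < e ^+ 2 / (`|C| + 1) by rewrite divr_gt0 ?exprn_gt0.
have [N _ hN] := near_infty_natSinv_lt (PosNum d0).
exists (x N); apply: filterS (nbhs_infty_ge N) => n Nn.
rewrite -ball_normE /=; apply: norm_lt_of_sqr_lt => //.
apply: (le_lt_trans (hx _ _ Nn)).
have := hN N (leqnn N); rewrite /= ltr_pdivlMr // => iN.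
rewrite mulrC; apply: le_lt_trans iN.
by rewrite ler_pM2l // (le_trans (ler_norm C)) // lerDl.
Qed.

Definition sqnorm {R : realDomainType} {k : nat} (x : 'I_k -> R) : R :=
  \sum_(j < k) x j ^+ 2.

Definition dotv {R : realDomainType} {k : nat} (x y : 'I_k -> R) : R :=
  \sum_(j < k) x j * y j.

Definition convex_comb {R : realDomainType} {k : nat} (t : R) (x y : 'I_k -> R) :
  'I_k -> R := fun j => (1 - t) * x j + t * y j.

Lemma sqnorm_ge0 (R : realDomainType) k (x : 'I_k -> R) : 0 <= sqnorm x.
Proof. by apply: sumr_ge0 => j _; exact: sqr_ge0. Qed.

Lemma sqr_le_sqnorm (R : realDomainType) k (x : 'I_k -> R) j : x j ^+ 2 <= sqnorm x.
Proof. by rewrite /sqnorm (bigD1 j) //= lerDl sumr_ge0 // => i _; exact: sqr_ge0. Qed.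

Lemma le_dotv_of_segment (R : realFieldType) k (m : R) (Y s : 'I_k -> R) :
  sqnorm Y <= m -> (forall t, 0 <= t <= 1 -> m <= sqnorm (convex_comb t Y s)) ->
  m <= dotv Y s.
Proof.
move=> Ym hseg.
pose P := \sum_(j < k) Y j * (s j - Y j).
pose Q := \sum_(j < k) (s j - Y j) ^+ 2.
have expand t : sqnorm (convex_comb t Y s) = sqnorm Y + 2 * t * P + t ^+ 2 * Q.
  rewrite /sqnorm /P /Q /convex_comb !mulr_sumr -!big_split /=.
  by apply: eq_bigr => j _; ring.
have mY : m <= sqnorm Y by have := hseg 0; rewrite expand lexx ler01; lra.
have P0 : 0 <= P.
  have Q0 : 0 <= Q by apply: sumr_ge0 => j _; exact: sqr_ge0.
  apply: (linear_coef_ge0 Q0) => t /andP[t0 t1].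
  have := hseg t; rewrite expand (ltW t0) t1; lra.
have -> : dotv Y s = P + sqnorm Y.
  by rewrite /dotv /sqnorm /P -big_split; apply: eq_bigr => j _ /=; ring.
lra.
Qed.

Lemma cvg_sqnorm (R : realType) k (x : nat -> 'I_k -> R) (Y : 'I_k -> R) :
  (forall j, x n j @[n --> \oo] --> Y j) -> sqnorm (x n) @[n --> \oo] --> sqnorm Y.
Proof.
move=> hx; apply: cvg_big; first exact: add_continuous.
by move=> j _; under eq_cvg do rewrite expr2; rewrite expr2; exact: cvgM.
Qed.

Section MinNorm.
Variables (R : realType) (k : nat) (S : set ('I_k -> R)).
Hypothesis S_convex : forall t s s', S s -> S s' -> 0 <= t <= 1 ->
  S (convex_comb t s s').

Let m := inf [set sqnorm s | s in S].

Let m_le s : S s -> m <= sqnorm s.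
Proof.
by move=> Ss; apply: ge_inf; [exists 0 => _ [? _ <-]; exact: sqnorm_ge0 | exists s].
Qed.

Lemma minimizing_seq_sqr_dist (sq : nat -> 'I_k -> R) :
  (forall n, S (sq n)) -> (forall n, sqnorm (sq n) < m + n.+1%:R^-1) ->
  forall j n p, (n <= p)%N -> (sq n j - sq p j) ^+ 2 <= 4 / n.+1%:R.
Proof.
move=> Ssq sq_lt j n p np.
have half01 : 0 <= (2^-1 : R) <= 1 by rewrite invr_ge0 invf_le1 ?ler0n ?ler1n.
have mid := m_le (S_convex (Ssq n) (Ssq p) half01).
have parallelogram : \sum_(i < k) (sq n i - sq p i) ^+ 2 +
    4 * sqnorm (convex_comb 2^-1 (sq n) (sq p)) =
    2 * sqnorm (sq n) + 2 * sqnorm (sq p).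
  rewrite /sqnorm /convex_comb !mulr_sumr -!big_split /=.
  by apply: eq_bigr => i _; field.
have dist_le : (sq n j - sq p j) ^+ 2 <= \sum_(i < k) (sq n i - sq p i) ^+ 2.
  exact: (sqr_le_sqnorm (fun i => sq n i - sq p i)).
have inv_le : p.+1%:R^-1 <= n.+1%:R^-1 :> R.
  by rewrite lef_pV2 ?posrE ?ltr0Sn // ler_nat ltnS.
have := sq_lt n; have := sq_lt p.
move: mid parallelogram dist_le inv_le.
set In := n.+1%:R^-1; set Ip := p.+1%:R^-1; lra.
Qed.

Lemma exists_min_norm_limit : S !=set0 ->
  exists Y, sqnorm Y <= m /\
    forall s, S s -> forall t, 0 <= t <= 1 -> m <= sqnorm (convex_comb t Y s).
Proof.
case=> s0 Ss0.
have hinf : has_inf [set sqnorm s | s in S].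
  by split; [exists (sqnorm s0), s0 | exists 0 => _ [? _ <-]; exact: sqnorm_ge0].
have /choice[sq hsq] : forall n : nat, exists s, S s /\ sqnorm s < m + n.+1%:R^-1.
  move=> n; have inv_gt0 : 0 < n.+1%:R^-1 :> R by rewrite invr_gt0.
  by have [_ [s Ss <-] lt] := inf_adherent inv_gt0 hinf; exists s.
have Ssq n := (hsq n).1; have sq_lt n := (hsq n).2.
(* [Y] is the minimal-norm point of the closure of [S]; it need not lie in [S]. *)
pose Y j := lim (sq n j @[n --> \oo]).
have sqY j : sq n j @[n --> \oo] --> Y j.
  exact: cvgn_of_sqr_dist_le (minimizing_seq_sqr_dist Ssq sq_lt j).
exists Y; split.
- have cv : sqnorm (sq n) - harmonic n @[n --> \oo] --> sqnorm Y - 0.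
    by apply: cvgB; [exact: cvg_sqnorm | exact: cvg_harmonic].
  rewrite -[sqnorm Y]subr0; apply: (cvgr_to_le cv); apply: nearW => n /=.
  by rewrite lerBlDr ltW.
- move=> s Ss t t01.
  have comb_cvg j : convex_comb t (sq n) s j @[n --> \oo] --> convex_comb t Y s j.
    by apply: cvgD; [exact: cvgMl_tmp | exact: cvg_cst].
  apply: (cvgr_to_ge (cvg_sqnorm comb_cvg)); apply: nearW => n.
  exact: m_le (S_convex (Ssq n) Ss t01).
Qed.

End MinNorm.

Lemma convex_sqnorm_lb_dot (R : realType) k (S : set ('I_k -> R)) (l : R) :
  (forall t s s', S s -> S s' -> 0 <= t <= 1 -> S (convex_comb t s s')) ->
  (forall s, S s -> l <= sqnorm s) -> exists Y, forall s, S s -> l <= dotv Y s.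
Proof.
move=> S_convex l_le; have [[s0 Ss0]|S0] := pselect (S !=set0); last first.
  by exists (fun=> 0) => s Ss; case: S0; exists s.
have [Y [Ym Yseg]] := exists_min_norm_limit S_convex (ex_intro _ s0 Ss0).
exists Y => s Ss; apply: (le_trans _ (le_dotv_of_segment Ym (Yseg s Ss))).
apply: lb_le_inf; first by exists (sqnorm s0), s0.
by move=> _ [s' Ss' <-]; exact: l_le.
Qed.

Section SSD.
Variables (R : realType) (B : lmodType R) (bf : B -> B -> R).
Hypothesis bfC : forall b c, bf b c = bf c b.
Hypothesis bfL : forall (r s : R) (a b c : B),
  bf (r *: a + s *: b) c = r * bf a c + s * bf b c.

Lemma bfD x y c : bf (x + y) c = bf x c + bf y c.
Proof. by have := bfL 1 1 x y c; rewrite !scale1r !mul1r. Qed.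

Lemma bfB x y c : bf (x - y) c = bf x c - bf y c.
Proof. by have := bfL 1 (-1) x y c; rewrite scale1r scaleN1r mul1r mulN1r. Qed.

Lemma bfZ r x c : bf (r *: x) c = r * bf x c.
Proof. by have := bfL r 0 x x c; rewrite scale0r addr0 mul0r addr0. Qed.

Lemma bf_sumr x k (l : 'I_k -> R) (c : 'I_k -> B) :
  bf x (\sum_(j < k) l j *: c j) = \sum_(j < k) l j * bf x (c j).
Proof.
elim: k l c => [|k IH] l c; first by rewrite big_ord0 bfC -(scale0r 0) bfZ mul0r big_ord0.
by rewrite !big_ord_recr bfC bfD bfC IH bfZ bfC.
Qed.

Lemma qfB x y : qf bf (x - y) = qf bf x - bf x y + qf bf y.
Proof. by rewrite /qf !bfB !(bfC _ (x - y)) !bfB (bfC y x); field. Qed.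

Lemma conv_hull_mem (A : set B) a : A a -> conv_hull A a.
Proof.
by move=> Aa; exists 1%N, (fun=> 1), (fun=> a); rewrite !big_ord1 scale1r.
Qed.

Lemma conv_hull_convex (A : set B) x y t : conv_hull A x -> conv_hull A y ->
  0 <= t <= 1 -> conv_hull A ((1 - t) *: x + t *: y).
Proof.
move=> [n1 [w1 [a1 [w1p w1s a1A ->]]]] [n2 [w2 [a2 [w2p w2s a2A ->]]]] /andP[t0 t1].
exists (n1 + n2)%N,
  (fun i => match split i with inl i1 => (1 - t) * w1 i1 | inr i2 => t * w2 i2 end),
  (fun i => match split i with inl i1 => a1 i1 | inr i2 => a2 i2 end).
have E1 (i : 'I_n1) : split (lshift n2 i) = inl i := unsplitK (inl i).
have E2 (i : 'I_n2) : split (rshift n1 i) = inr i := unsplitK (inr i).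
split.
- by move=> i; case: (split i) => j; apply: mulr_ge0; rewrite ?subr_ge0.
- rewrite big_split_ord /=.
  under eq_bigr do rewrite E1.
  under [X in _ + X]eq_bigr do rewrite E2.
  by rewrite -!mulr_sumr w1s w2s !mulr1 subrK.
- by move=> i; case: (split i).
- rewrite big_split_ord /=.
  under [X in _ = X + _]eq_bigr do rewrite E1.
  under [X in _ = _ + X]eq_bigr do rewrite E2.
  by rewrite !scaler_sumr; congr (_ + _); apply: eq_bigr => i _; rewrite scalerA.
Qed.

Lemma convw_of_support_ge (A : set B) b :
  (forall d eta, 0 < eta -> exists2 a, A a & bf b d - eta < bf a d) -> convw bf A b.
Proof.
move=> hb cs e e0.
pose c (j : 'I_(size cs)) := nth 0 cs j.
pose L x j := bf (x - b) (c j).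
have [[s Cs Ls]|far] := pselect (exists2 s, conv_hull A s & sqnorm (L s) < e ^+ 2).
  exists s => // c0 c0cs; have ic0 : (index c0 cs < size cs)%N by rewrite index_mem.
  rewrite -(nth_index 0 c0cs) -/(c (Ordinal ic0)); apply: norm_lt_of_sqr_lt => //.
  exact: le_lt_trans (sqr_le_sqnorm (L s) (Ordinal ic0)) Ls.
(* Otherwise the convex set [L @` conv_hull A] keeps squared distance [e^2]
   from the origin, and the separating [Y] yields the direction
   [d = - \sum_j Y j *: c j] along which all of [A] stays [e^2] below [b]. *)
exfalso.
have L_convex t s s' : (L @` conv_hull A) s -> (L @` conv_hull A) s' ->
    0 <= t <= 1 -> (L @` conv_hull A) (convex_comb t s s').
  move=> [x Cx <-] [y Cy <-] t01; exists ((1 - t) *: x + t *: y).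
    exact: conv_hull_convex.
  apply/funext => j; rewrite /L /convex_comb -bfL; congr bf.
  by rewrite !scalerBr addrACA -opprD -scalerDl subrK scale1r.
have L_far s : (L @` conv_hull A) s -> e ^+ 2 <= sqnorm s.
  by move=> [x Cx <-]; rewrite leNgt; apply/negP => lt; apply: far; exists x.
have [Y hY] := convex_sqnorm_lb_dot L_convex L_far.
have e2 : 0 < e ^+ 2 / 2 by rewrite divr_gt0 ?exprn_gt0.
have [a Aa] := hb (\sum_j (- Y j) *: c j) _ e2.
have := hY _ (ex_intro2 _ _ a (conv_hull_mem Aa) erefl).
have -> : dotv Y (L a) = \sum_j (- Y j) * bf b (c j) - \sum_j (- Y j) * bf a (c j).
  by rewrite /dotv /L -sumrB; apply: eq_bigr => j _; rewrite bfB; ring.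
rewrite !bf_sumr; lra.
Qed.

Lemma fenchel_at_ge (f : B -> \bar R) x c :
  ((bf c x)%:E - f c <= fenchel_at bf f x)%E.
Proof. by apply: ereal_sup_ubound; exists c. Qed.

Lemma PhiA_ge (A : set B) x a : A a -> ((bf x a - qf bf a)%:E <= PhiA bf A x)%E.
Proof. by move=> Aa; apply: ereal_sup_ubound; exists a. Qed.

Section PhiA.
Variable A : set B.
Hypothesis A_qpos : q_positive bf A.

Lemma PhiA_qf a : A a -> PhiA bf A a = (qf bf a)%:E.
Proof.
move=> Aa; apply/eqP; rewrite eq_le; apply/andP; split.
- apply: ge_ereal_sup => _ [a' Aa' <-]; rewrite lee_fin.
  by have := A_qpos.2 _ _ Aa Aa'; rewrite qfB; lra.
- by apply: le_trans (PhiA_ge a Aa); rewrite lee_fin /qf; lra.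
Qed.

Lemma PhiA_le_fenchel x : (PhiA bf A x <= fenchel_at bf (PhiA bf A) x)%E.
Proof.
apply: ge_ereal_sup => _ [a Aa <-].
by have := fenchel_at_ge (PhiA bf A) x a; rewrite PhiA_qf // -EFinB bfC.
Qed.

Lemma Gf_PhiA_convw b : Gf bf (PhiA bf A) b -> convw bf A b.
Proof.
have [[a0 Aa0] _] := A_qpos; rewrite /Gf /=.
move: (PhiA_ge b Aa0) (PhiA_le_fenchel b).
case EF: (PhiA bf A b) => [F| |]; case EG: (fenchel_at bf (PhiA bf A) b) => [G| |] //=.
move=> _ _ [FG]; apply: convw_of_support_ge => d eta eta0.
(* Fenchel at [b + d]: [Phi_A (b + d) >= [b + d, b] - G = F + [d, b]]. *)
have lt : ((F + bf d b - eta)%:E < PhiA bf A (b + d))%E.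
  move: (fenchel_at_ge (PhiA bf A) b (b + d)); rewrite EG bfD.
  case: (PhiA bf A (b + d)) => [Fd| |] //= => [|_]; last exact: ltry.
  by rewrite -EFinB !lee_fin lte_fin; lra.
have [_ [a Aa <-]] := ereal_sup_gt lt; rewrite lte_fin bfD => lta.
exists a => //; have := PhiA_ge b Aa; rewrite EF lee_fin (bfC a d) (bfC b d); lra.
Qed.

Lemma Gf_PhiA_Pq b :
  (convw bf A b -> ((qf bf b)%:E <= PhiA bf A b)%E) ->
  Gf bf (PhiA bf A) b -> Pq bf (fenchel_at bf (PhiA bf A)) b.
Proof.
move=> qf_le Gb; have := qf_le (Gf_PhiA_convw Gb); move: Gb (PhiA_le_fenchel b).
rewrite /Gf /Pq /qf /=.
case: (PhiA bf A b) => [F| |]; case: (fenchel_at bf (PhiA bf A) b) => [G| |] //=.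
by rewrite -EFinD !lee_fin => -[?] ? ?; congr (_%:E); lra.
Qed.

Lemma Pq_Gf_PhiA b : Pq bf (fenchel_at bf (PhiA bf A)) b -> Gf bf (PhiA bf A) b.
Proof.
have [[a0 Aa0] _] := A_qpos; rewrite /Gf /Pq /qf /= => Pb.
move: (PhiA_ge b Aa0) (PhiA_le_fenchel b) (fenchel_at_ge (PhiA bf A) b b).
rewrite Pb; case: (PhiA bf A b) => [F| |] //=.
by rewrite -EFinD !lee_fin => _ ? ?; congr (_%:E); lra.
Qed.

End PhiA.
End SSD.

Theorem mainTheorem11 (R : realType) (B : lmodType R) (bf : B -> B -> R)
  (A : set B) :
  SSD_space bf -> q_positive bf A ->
  (forall b, convw bf A b -> ((qf bf b)%:E <= PhiA bf A b)%E) ->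
  Gf bf (PhiA bf A) = Pq bf (fenchel_at bf (PhiA bf A)).
Proof.
move=> [bfC bfL _] A_qpos qf_le_PhiA; apply/seteqP; split => b.
- exact: Gf_PhiA_Pq (qf_le_PhiA b).
- exact: Pq_Gf_PhiA.
Qed.
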